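(* Let $K=2$, $M\ge2$, $N\ge1$, and let $c>0$, $\gamma>0$, $p>0$, $\sigma^2>0$. Define, for $k\in\{1,2\}$, $$\mathrm{SINR}_k^{(NL)}=\frac{p\big(c^2(MN^2+N^2+MN+N)+2c\gamma N(M+1)+\gamma^2(M+1)\big)}{p\big(c^2(N^2+MN)+2c\gamma N+\gamma^2\big)+\sigma^2(cN+\gamma)}$$ and $$\mathrm{SINR}_k^{(w)}=\frac{p(M+1)\gamma}{p\gamma+\sigma^2}.$$ Then $\mathrm{SINR}_k^{(NL)}>\mathrm{SINR}_k^{(w)}$ if and only if $$\frac{p}{\sigma^2}<\frac{N+1}{\gamma(M-1)}+\frac{1}{c(M-1)},$$ equivalently, if and only if $$N>\gamma\Big(\frac{p}{\sigma^2}(M-1)-\frac1c\Big)-1.$$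
   Context: $\mathrm{SINR}_k^{(NL)}$ is the approximate SINR of an RIS-aided massive MIMO system (MRC receiver) with pure-NLoS cascaded channels for two users with equal parameters $c_1=c_2=c$ (cascaded path-loss factor), $\gamma_1=\gamma_2=\gamma$ (direct-link path loss), and $p_1=p_2=p$ (transmit power). $\mathrm{SINR}_k^{(w)}$ is the corresponding approximate SINR without RIS. $M$ is the number of BS antennas, $N$ the number of RIS elements, and $\sigma^2$ the noise power. *)

From mathcomp Require Import all_boot all_order all_algebra.
Set Implicit Arguments. Unset Strict Implicit. Unset Printing Implicit Defensive.
Import Order.TTheory GRing.Theory Num.Theory.
Local Open Scope ring_scope.

(* Approximate SINR with pure-NLoS cascaded channels (K = 2, equal user
   parameters, so the value is the same for k = 1, 2).
   M = #BS antennas, N = #RIS elements, c = cascaded path-loss factor,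
   g = direct-link path loss, p = transmit power, s2 = noise power sigma^2. *)
Definition SINR_NL {R : realFieldType} (M N : nat) (c g p s2 : R) : R :=
  let M' := M%:R in let N' := N%:R in
  p * (c ^+ 2 * (M' * N' ^+ 2 + N' ^+ 2 + M' * N' + N')
       + 2 * c * g * N' * (M' + 1) + g ^+ 2 * (M' + 1))
  / (p * (c ^+ 2 * (N' ^+ 2 + M' * N') + 2 * c * g * N' + g ^+ 2)
     + s2 * (c * N' + g)).

Definition SINR_w {R : realFieldType} (M : nat) (g p s2 : R) : R :=
  p * (M%:R + 1) * g / (p * g + s2).

From mathcomp Require Import all_boot all_order all_algebra.
From mathcomp Require Import ring lra.
Import Order.TTheory GRing.Theory Num.Theory.
Local Open Scope ring_scope.

(* Both SINRs are quotients of positive quantities, so comparing them is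
   comparing cross products.  Writing m = M, n = N, the cross difference
     num_NL * den_w - num_w * den_NL
   factors as  p c n (m + 1) * (s2 (c (n + 1) + g) - p g c (m - 1)),
   a polynomial identity valid in any commutative ring.  Since the first
   factor is positive, the RIS improves the SINR exactly when
     p g c (m - 1) < s2 (c (n + 1) + g).                          (crit)
   The two characterisations of the corollary are rearrangements of (crit):
   divide by s2 g c (m - 1) for the bound on p / s2, and by s2 c for the
   bound on n. *)

Lemma ltr_pdiv2_cross (R : realFieldType) (a b x y : R) : 0 < x -> 0 < y ->
  (a / x < b / y) = (a * y < b * x).
Proof. by move=> x_gt0 y_gt0; rewrite ltr_pdivrMr // mulrAC ltr_pdivlMr. Qed.

Lemma SINR_cross_difference (R : comPzRingType) (m n c g p s2 : R) :
  p * (c ^+ 2 * (m * n ^+ 2 + n ^+ 2 + m * n + n)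
       + 2 * c * g * n * (m + 1) + g ^+ 2 * (m + 1)) * (p * g + s2)
  - p * (m + 1) * g
    * (p * (c ^+ 2 * (n ^+ 2 + m * n) + 2 * c * g * n + g ^+ 2)
       + s2 * (c * n + g))
  = p * c * n * (m + 1) * (s2 * (c * (n + 1) + g) - p * g * c * (m - 1)).
Proof. by ring. Qed.

Section SINRComparison.
Variables (R : realFieldType) (M N : nat) (c g p s2 : R).
Hypotheses (M_ge2 : (2 <= M)%N) (N_ge1 : (1 <= N)%N).
Hypotheses (c_gt0 : 0 < c) (g_gt0 : 0 < g) (p_gt0 : 0 < p) (s2_gt0 : 0 < s2).

Let m_gt1 : 1 < M%:R :> R. Proof. by rewrite ltr1n. Qed.
Let n_gt0 : 0 < N%:R :> R. Proof. by rewrite ltr0n. Qed.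

Lemma SINR_NL_den_gt0 :
  0 < p * (c ^+ 2 * (N%:R ^+ 2 + M%:R * N%:R) + 2 * c * g * N%:R + g ^+ 2)
      + s2 * (c * N%:R + g).
Proof.
have m_gt0 : 0 < M%:R :> R := lt_trans ltr01 m_gt1.
by rewrite !(addr_gt0, mulr_gt0, exprn_gt0).
Qed.

Lemma SINR_gain_criterion :
  (SINR_w M g p s2 < SINR_NL M N c g p s2) =
  (p * g * c * (M%:R - 1) < s2 * (c * (N%:R + 1) + g)).
Proof.
have den_w_gt0 : 0 < p * g + s2 by rewrite addr_gt0 ?mulr_gt0.
rewrite /SINR_w /SINR_NL ltr_pdiv2_cross ?SINR_NL_den_gt0 //.
rewrite -subr_gt0 -[RHS]subr_gt0 SINR_cross_difference pmulr_rgt0 //.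
by rewrite !mulr_gt0 // addr_gt0 // (lt_trans ltr01 m_gt1).
Qed.

Lemma criterion_SNR_bound :
  (p * g * c * (M%:R - 1) < s2 * (c * (N%:R + 1) + g)) =
  (p / s2 < (N%:R + 1) / (g * (M%:R - 1)) + 1 / (c * (M%:R - 1))).
Proof.
have m1_gt0 : 0 < M%:R - 1 :> R by rewrite subr_gt0.
have -> : (N%:R + 1) / (g * (M%:R - 1)) + 1 / (c * (M%:R - 1))
          = (c * (N%:R + 1) + g) / (g * c * (M%:R - 1)).
  by field; rewrite ?mulf_neq0 ?gt_eqF.
by rewrite ltr_pdiv2_cross ?mulr_gt0 // !mulrA [s2 * _]mulrC.
Qed.

Lemma criterion_RIS_size_bound :
  (p * g * c * (M%:R - 1) < s2 * (c * (N%:R + 1) + g)) =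
  (g * (p / s2 * (M%:R - 1) - 1 / c) - 1 < N%:R).
Proof.
have sc_inv_gt0 : 0 < (s2 * c)^-1 by rewrite invr_gt0 mulr_gt0.
rewrite -[in RHS]subr_lt0.
have -> : g * (p / s2 * (M%:R - 1) - 1 / c) - 1 - N%:R
          = (p * g * c * (M%:R - 1) - s2 * (c * (N%:R + 1) + g)) / (s2 * c).
  by field; rewrite ?mulf_neq0 ?gt_eqF.
by rewrite pmulr_llt0 // subr_lt0.
Qed.

End SINRComparison.

Theorem corollary3 (R : realFieldType) (M N : nat) (c g p s2 : R) :
  (2 <= M)%N -> (1 <= N)%N -> 0 < c -> 0 < g -> 0 < p -> 0 < s2 ->
  (SINR_w M g p s2 < SINR_NL M N c g p s2 <->
     p / s2 < (N%:R + 1) / (g * (M%:R - 1)) + 1 / (c * (M%:R - 1)))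
  /\
  (SINR_w M g p s2 < SINR_NL M N c g p s2 <->
     g * (p / s2 * (M%:R - 1) - 1 / c) - 1 < N%:R).
Proof.
move=> M_ge2 N_ge1 c_gt0 g_gt0 p_gt0 s2_gt0.
rewrite SINR_gain_criterion //.
by rewrite -criterion_SNR_bound // -criterion_RIS_size_bound.
Qed.
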